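(* Consider units $j=1,\dots,N$ with $N=N_0+N_1$, partitioned into a set $\mathcal{J}_1$ of $N_1\ge 1$ treated units and a set $\mathcal{J}_0$ of $N_0$ control units, with treatment indicators $D_j=\mathbf{1}\{j\in\mathcal{J}_1\}$. Let $\{X_j\}_{j=1}^N$ be fixed (non-random) covariates. Potential outcomes satisfy $Y_j(0)=m(X_j)+\epsilon_j$ with $\mathbb{E}[\epsilon_j]=0$, where $m$ belongs to a class $\mathcal{M}$ of functions; observed outcomes are $Y_j=D_jY_j(1)+(1-D_j)Y_j(0)$ and $\tau_j=Y_j(1)-Y_j(0)$. Let $\hat m$ be an estimator of $m$ computed from the data, and let $$\hat\beta\in\operatorname{argmin}_{b\in\mathbb{R}}\frac1N\sum_{j=1}^N\big(Y_j-bD_j-\hat m(X_j)\big)^2 .$$ Fix $c\in\mathbb{R}$. Let $\tilde m$ be the estimator of $m$ computed imposing $\beta=c$, and define null-imposed residuals $\tilde e_j=Y_j-cD_j-\tilde m(X_j)$, $j=1,\dots,N$. For each $g=(g_1,\dots,g_N)\in\mathcal{G}_N:=\{-1,1\}^N$, define artificial outcomes $\check Y^g_j=cD_j+\tilde m(X_j)+g_j\tilde e_j$, let $\check m^g$ be the estimator of $m$ computed (by the same procedure) from the artificial data $\{\check Y_j^g,D_j,X_j\}_{j=1}^N$, and let $$\check\beta^g\in\operatorname{argmin}_{b\in\mathbb{R}}\frac1N\sum_{j=1}^N\big(\check Y^g_j-bD_j-\check m^g(X_j)\big)^2 .$$ Let $g^*_N=(g^*_1,\dots,g^*_N)\sim\mathrm{Uniform}(\mathcal{G}_N)$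 be drawn independently of $Y_1,\dots,Y_N$. All limits are as $N_0\to\infty$ with $N_1$ and $\mathcal{J}_1$ held fixed. Suppose (A1) $\max_{j\in\mathcal{J}_1}|\hat m(X_j)-m(X_j)|\overset{p}{\to}0$. Then $$\hat\beta-\frac1{N_1}\sum_{j\in\mathcal{J}_1}(\tau_j+\epsilon_j)\overset{p}{\to}0 .$$ If in addition (A2) $\max_{j\in\mathcal{J}_1}|\hat m(X_j)-\tilde m(X_j)|\overset{p}{\to}0$ and (A3) for every $\delta>0$, $\lim_{N_0\to\infty}\mathbb{P}\big[\max_{j\in\mathcal{J}_1}|\tilde m(X_j)-\check m^{g^*_N}(X_j)|>\delta\big]=0$, then $$\check\beta^{g^*_N}-c-\frac1{N_1}\sum_{j\in\mathcal{J}_1}g^*_j(\tau_j+\epsilon_j-c)\overset{p}{\to}0,$$ and this convergence also holds conditionally on the data: for every $\delta>0$, $$\mathbb{P}\Big[\Big|\check\beta^{g^*_N}-c-\frac1{N_1}\sum_{j\in\mathcal{J}_1}g^*_j(\tau_j+\epsilon_j-c)\Big|>\delta\ \Big|\ Y_1,\dots,Y_N\Big]\overset{p}{\to}0 .$$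
   Context: This is the setting of a wild bootstrap with the null hypothesis $\beta=c$ imposed, in a partially linear model $Y_j=\beta D_j+m(X_j)+e_j$, asymptotically with a fixed number of treated units and a growing number of controls. $\overset{p}{\to}$ denotes convergence in probability as $N_0\to\infty$. *)

From HB Require Import structures.
From mathcomp Require Import all_boot all_order all_algebra.
From mathcomp Require Import all_classical all_reals all_analysis.
Unset Printing Implicit Defensive.
Import Order.TTheory GRing.Theory Num.Theory.
Import numFieldNormedType.Exports.
Local Open Scope classical_set_scope.
Local Open Scope ring_scope.

(* Units are labelled by natural numbers k = 0,1,2,...; at stage n (n = N_0,
   the number of controls) the sample is units 0 .. N1+n-1, the treated set
   J_1 = {0,..,N1-1} (fixed), the controls are N1 .. N1+n-1. *)

Section Model.
Variable (R : realType) (T : Type) (Xt : Type) (N1 : nat).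

Definition Dind (k : nat) : R := if (k < N1)%N then 1 else 0.

Definition Y0 (m : Xt -> R) (X : nat -> Xt) (eps : nat -> T -> R) (k : nat)
  (w : T) : R := m (X k) + eps k w.

Definition tau (m : Xt -> R) (X : nat -> Xt) (eps Y1 : nat -> T -> R) (k : nat)
  (w : T) : R := Y1 k w - Y0 m X eps k w.

Definition Yobs (m : Xt -> R) (X : nat -> Xt) (eps Y1 : nat -> T -> R) (k : nat)
  (w : T) : R := Dind k * Y1 k w + (1 - Dind k) * Y0 m X eps k w.

Definition Ydata (m : Xt -> R) (X : nat -> Xt) (eps Y1 : nat -> T -> R) (n : nat)
  (w : T) : 'I_(N1 + n) -> R := fun j => Yobs m X eps Y1 j w.

Definition SSR (X : nat -> Xt) (n : nat) (y : 'I_(N1 + n) -> R) (mh : Xt -> R)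
  (b : R) : R :=
  (N1 + n)%:R^-1 * \sum_(j < N1 + n) (y j - b * Dind j - mh (X j)) ^+ 2.

Definition sgnb (b : bool) : R := if b then 1 else -1.

Definition Ycheck (X : nat -> Xt) (n : nat) (c : R) (y : 'I_(N1 + n) -> R)
  (mt : Xt -> R) (g : {ffun 'I_(N1 + n) -> bool}) : 'I_(N1 + n) -> R :=
  fun j => c * Dind j + mt (X j) + sgnb (g j) * (y j - c * Dind j - mt (X j)).

Definition maxJ1 (f : 'I_N1 -> R) : R := \big[Num.max/0]_(j < N1) f j.

(* Probability, with respect to g* ~ Uniform({-1,1}^N) only, of an event
   about g*.  Since g* is independent of the data, this is the conditional
   probability given the data. *)
Definition bootP (n : nat) (E : {ffun 'I_(N1 + n) -> bool} -> Prop) : R :=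
  #|[set g : {ffun 'I_(N1 + n) -> bool} | `[< E g >] ]|%:R / (2 ^ (N1 + n))%:R.
End Model.

Section Prob.
Context {d : measure_display} {T : measurableType d} {R : realType}.
Variable P : probability T R.

Definition cvg_prob0 (Z : nat -> T -> R) : Prop :=
  forall delta : R, 0 < delta ->
    (P [set w | delta < `|Z n w|]) @[n --> \oo] --> 0%E.

(* Probability of an event depending on the data w and on g* (independent,
   uniform on {-1,1}^N): joint law = P (x) Uniform, i.e.
   P[E] = E_P[ P*(E(w, .)) ]. *)
Definition jointP (N1 n : nat) (E : T -> {ffun 'I_(N1 + n) -> bool} -> Prop)
  : \bar R := (\int[P]_w (bootP R N1 n (E w))%:E)%E.
End Prob.

From HB Require Import structures.
From mathcomp Require Import all_boot all_order all_algebra.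
From mathcomp Require Import all_classical all_reals all_analysis.
From mathcomp Require Import ring lra measurable_realfun.
Import Order.TTheory GRing.Theory Num.Theory.
Import numFieldNormedType.Exports.
Local Open Scope classical_set_scope.
Local Open Scope ring_scope.

(* Since only the treated units carry the dummy, least squares in [b] sets [b]
   to the mean, over the treated units, of the residuals [y_j - mh (X_j)]: the
   controls add a [b]-free constant to the objective.  Hence [betahat] minus
   the mean of [tau_j + eps_j] is the mean of [m (X_j) - mhat (X_j)], bounded by
   the (A1) error, and the bootstrap estimator minus [c] and its target is the
   mean of [(mtil - mchk) (X_j) + g_j (m - mtil) (X_j)], bounded by the (A3)
   error plus the (A1) and (A2) errors.  Splitting the deviation event at
   [delta / 2] turns these bounds into convergence in probability for the joint
   law; Markov's inequality applied to the bootstrap probability, as a function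
   of the data, gives the conditional statement. *)

Section LeastSquaresOnTreatmentDummy.
Context {R : realType} {N1 : nat}.
Hypothesis N1_gt0 : (0 < N1)%N.

Lemma Dind_treated (j : 'I_N1) : Dind R N1 j = 1.
Proof. by rewrite /Dind ltn_ord. Qed.

Lemma Dind_control (i : nat) : Dind R N1 (N1 + i) = 0.
Proof. by rewrite /Dind ltnNge leq_addr. Qed.

Lemma sum_sq_dummyE n (e : 'I_(N1 + n) -> R) b :
  let b0 := N1%:R^-1 * \sum_(j < N1) e (lshift n j) in
  \sum_(j < N1 + n) (e j - b * Dind R N1 j) ^+ 2 =
  \sum_(j < N1 + n) (e j - b0 * Dind R N1 j) ^+ 2 + N1%:R * (b - b0) ^+ 2.
Proof.
move=> b0.
have centered : \sum_(j < N1) (e (lshift n j) - b0) = 0.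
  rewrite sumrB sumr_const card_ord /b0 -[_ *+ N1]mulr_natl.
  by rewrite mulVKf ?subrr // pnatr_eq0 -lt0n.
have control b' : \sum_(i < n) (e (rshift N1 i) - b' * Dind R N1 (rshift N1 i)) ^+ 2
    = \sum_(i < n) e (rshift N1 i) ^+ 2.
  by apply: eq_bigr => i _; rewrite (Dind_control i) mulr0 subr0.
have treated b' : \sum_(j < N1) (e (lshift n j) - b' * Dind R N1 (lshift n j)) ^+ 2
    = \sum_(j < N1) (e (lshift n j) - b') ^+ 2.
  by apply: eq_bigr => j _; rewrite (Dind_treated j) mulr1.
rewrite !big_split_ord /= !control !treated addrAC.
have -> : \sum_(j < N1) (e (lshift n j) - b) ^+ 2 = \sum_(j < N1)
    ((e (lshift n j) - b0) ^+ 2 - 2 * (b - b0) * (e (lshift n j) - b0) + (b - b0) ^+ 2).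
  by apply: eq_bigr => j _; ring.
rewrite big_split sumrB /= -mulr_sumr centered sumr_const card_ord -mulr_natl.
ring.
Qed.

Lemma argmin_sum_sq_dummy n (e : 'I_(N1 + n) -> R) bs :
  (forall b, \sum_(j < N1 + n) (e j - bs * Dind R N1 j) ^+ 2 <=
             \sum_(j < N1 + n) (e j - b * Dind R N1 j) ^+ 2) ->
  bs = N1%:R^-1 * \sum_(j < N1) e (lshift n j).
Proof.
set b0 := _ * _ => bs_min.
have := bs_min b0; rewrite sum_sq_dummyE -/b0 gerDl pmulr_rle0 ?ltr0n //.
by rewrite le_eqVlt ltNge sqr_ge0 orbF sqrf_eq0 subr_eq0 => /eqP.
Qed.

Lemma SSR_argminE {Xt : Type} {X : nat -> Xt} {n} {y : 'I_(N1 + n) -> R}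
    {mh : Xt -> R} {bs} :
  (forall b, SSR R Xt N1 X n y mh bs <= SSR R Xt N1 X n y mh b) ->
  bs = N1%:R^-1 * \sum_(j < N1) (y (lshift n j) - mh (X j)).
Proof.
move=> bs_min; apply: (@argmin_sum_sq_dummy n (fun j => y j - mh (X j))) => b.
have reorder b' : \sum_(j < N1 + n) (y j - b' * Dind R N1 j - mh (X j)) ^+ 2 =
    \sum_(j < N1 + n) (y j - mh (X j) - b' * Dind R N1 j) ^+ 2.
  by apply: eq_bigr => j _; congr (_ ^+ 2); ring.
by have := bs_min b; rewrite /SSR ler_pM2l ?invr_gt0 ?ltr0n ?addn_gt0 ?N1_gt0 // !reorder.
Qed.

Lemma mean_subr (f : 'I_N1 -> R) (c : R) :
  N1%:R^-1 * \sum_(j < N1) f j - c = N1%:R^-1 * \sum_(j < N1) (f j - c).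
Proof.
by rewrite sumrB sumr_const card_ord mulrBr -[c *+ N1]mulr_natl mulKf // pnatr_eq0 -lt0n.
Qed.

Lemma norm_mean_le (f : 'I_N1 -> R) (M : R) : (forall j, `|f j| <= M) ->
  `|N1%:R^-1 * \sum_(j < N1) f j| <= M.
Proof.
move=> f_le; rewrite normrM normfV normr_nat mulrC ler_pdivrMr ?ltr0n //.
apply: (le_trans (ler_norm_sum _ _ _)); apply: (le_trans (ler_sum _ (fun j _ => f_le j))).
by rewrite sumr_const card_ord mulr_natr.
Qed.

End LeastSquaresOnTreatmentDummy.

Lemma le_maxJ1 {R : realType} {N1} (f : 'I_N1 -> R) j : f j <= maxJ1 R N1 f.
Proof. exact: le_bigmax. Qed.

Lemma maxJ1_ge0 {R : realType} {N1} (f : 'I_N1 -> R) : 0 <= maxJ1 R N1 f.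
Proof. exact: bigmax_ge_id. Qed.

Lemma normr_sgnb (R : realType) b : `|sgnb R b| = 1.
Proof. by case: b; rewrite /sgnb ?normrN normr1. Qed.

Section BootstrapProbability.
Variables (R : realType) (N1 n : nat).
Local Notation signs := {ffun 'I_(N1 + n) -> bool}.

Lemma card_signs : #|{: signs}| = (2 ^ (N1 + n))%N.
Proof. by rewrite card_ffun card_bool card_ord. Qed.

Lemma bootP_ge0 (E : signs -> Prop) : 0 <= bootP R N1 n E.
Proof. by rewrite /bootP divr_ge0 // ler0n. Qed.

Lemma bootP_le1 (E : signs -> Prop) : bootP R N1 n E <= 1.
Proof.
rewrite /bootP ler_pdivrMr ?ltr0n ?expn_gt0 // mul1r ler_nat -card_signs.
exact: max_card.
Qed.

Lemma le_bootP (E E' : signs -> Prop) :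
  (forall g, E g -> E' g) -> bootP R N1 n E <= bootP R N1 n E'.
Proof.
move=> EE'; rewrite /bootP ler_pM2r ?invr_gt0 ?ltr0n ?expn_gt0 // ler_nat.
by apply/subset_leq_card/fintype.subsetP => g; rewrite !inE => /asboolP/EE'/asboolP.
Qed.

Lemma bootP_sum_indic (E : signs -> Prop) :
  bootP R N1 n E = (\sum_(g : signs) \1_[set g | E g] g) / (2 ^ (N1 + n))%:R.
Proof.
rewrite /bootP -sum1_card natr_sum big_mkcond /=; congr (_ / _).
by apply: eq_bigr => g _; rewrite indicE /in_mem /mem /= /in_set asboolb; case: asboolP.
Qed.

Lemma bootP_le_split (W U : signs -> R) (v delta : R) :
  (forall g, `|W g| <= U g + `|v|) ->
  bootP R N1 n (fun g => delta < `|W g|) <=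
    bootP R N1 n (fun g => delta / 2 < U g) + (delta / 2 < `|v|)%R%:R.
Proof.
move=> W_le; have [v_large|v_small] := ltP (delta / 2) `|v|.
  by rewrite mulr1n (le_trans (bootP_le1 _)) // lerDr bootP_ge0.
rewrite mulr0n addr0; apply: le_bootP => g W_large; have := W_le g; lra.
Qed.

End BootstrapProbability.

Lemma cvge0_squeeze {R : realType} {u v : nat -> \bar R} :
  v n @[n --> \oo] --> 0%E -> (forall n, (0 <= u n <= v n)%E) ->
  u n @[n --> \oo] --> 0%E.
Proof. by move=> v_cvg uv; apply: (squeeze_cvge _ (cvg_cst 0%E) v_cvg); exact: nearW. Qed.

Lemma cvge0D {R : realType} {u v : nat -> \bar R} :
  u n @[n --> \oo] --> 0%E -> v n @[n --> \oo] --> 0%E ->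
  (u n + v n)%E @[n --> \oo] --> 0%E.
Proof. by move=> u_cvg v_cvg; rewrite -[0%E]adde0; apply: cvgeD. Qed.

Section ConvergenceInProbability.
Context {d : measure_display} {T : measurableType d} {R : realType}.
Variable P : probability T R.

Lemma measurable_ltr_set (h : T -> R) (a : R) :
  measurable_fun setT h -> measurable [set w | a < h w].
Proof.
move=> mh; rewrite -[X in measurable X]setTI.
exact: (measurable_fun_ltr (measurable_cst a) mh measurableT (Y := [set true])).
Qed.

Lemma measurable_normr_gt (h : T -> R) (a : R) :
  measurable_fun setT h -> measurable [set w | a < `|h w|].
Proof. by move=> mh; apply: measurable_ltr_set; exact: measurableT_comp. Qed.

Lemma measurable_maxJ1 N1 (f : T -> 'I_N1 -> R) :
  (forall j, measurable_fun setT (fun w => f w j)) ->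
  measurable_fun setT (fun w => maxJ1 R N1 (f w)).
Proof.
move=> mf; rewrite /maxJ1; elim: (index_enum _) => [|j s IH].
  by under eq_fun do rewrite big_nil; exact: measurable_cst.
by under eq_fun do rewrite big_cons; exact: measurable_maxr.
Qed.

Lemma measurable_mean N1 (f : T -> 'I_N1 -> R) :
  (forall j, measurable_fun setT (fun w => f w j)) ->
  measurable_fun setT (fun w => N1%:R^-1 * \sum_(j < N1) f w j).
Proof. by move=> mf; apply: measurable_funM => //; exact: measurable_sum. Qed.

Lemma measurable_bootP N1 n (E : T -> {ffun 'I_(N1 + n) -> bool} -> Prop) :
  (forall g, measurable [set w | E w g]) ->
  measurable_fun setT (fun w => bootP R N1 n (E w)).
Proof.
move=> mE; under eq_fun do rewrite bootP_sum_indic.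
apply: measurable_funM => //; apply: measurable_sum => g.
exact: (measurable_indic (mE g)).
Qed.

Lemma markov_prob (f : T -> R) (a : R) : 0 < a -> measurable_fun setT f ->
  (forall w, 0 <= f w) -> (a%:E * P [set w | (a < f w)%R] <= \int[P]_w (f w)%:E)%E.
Proof.
move=> a_gt0 mf f_ge0.
have mfE : measurable_fun setT (EFin \o f) by exact/measurable_EFinP.
have := le_integral_abse P measurableT mfE a_gt0; rewrite setTI.
have -> : (\int[P]_x `|(EFin \o f) x| = \int[P]_w (f w)%:E)%E.
  by apply: eq_integral => w _; rewrite /= ger0_norm.
apply: le_trans; apply: lee_wpmul2l; first by rewrite lee_fin ltW.
apply: le_measure; rewrite ?inE.
- exact: measurable_ltr_set.
- rewrite -[X in measurable X]setTI; apply: emeasurable_fun_c_infty => //.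
  exact: measurableT_comp.
by move=> w /= /ltW; rewrite ger0_norm ?lee_fin.
Qed.

Lemma cvg_prob0_le (Z Z' : nat -> T -> R) :
  (forall n, measurable_fun setT (Z n)) -> (forall n, measurable_fun setT (Z' n)) ->
  (forall n w, `|Z n w| <= `|Z' n w|) -> cvg_prob0 P Z' -> cvg_prob0 P Z.
Proof.
move=> mZ mZ' Z_le Z'_cvg delta delta_gt0.
apply: (cvge0_squeeze (Z'_cvg _ delta_gt0)) => n; rewrite measure_ge0 /=.
apply: le_measure; rewrite ?inE; try exact: measurable_normr_gt.
by move=> w /= /lt_le_trans; apply.
Qed.

Lemma cvg_prob0D (Z1 Z2 : nat -> T -> R) :
  (forall n, measurable_fun setT (Z1 n)) -> (forall n, measurable_fun setT (Z2 n)) ->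
  cvg_prob0 P Z1 -> cvg_prob0 P Z2 -> cvg_prob0 P (fun n w => Z1 n w + Z2 n w).
Proof.
move=> mZ1 mZ2 Z1_cvg Z2_cvg delta delta_gt0.
have half_gt0 : 0 < delta / 2 by rewrite divr_gt0.
apply: (cvge0_squeeze (cvge0D (Z1_cvg _ half_gt0) (Z2_cvg _ half_gt0))) => n.
rewrite measure_ge0 /=.
set Z1_large := [set w | delta / 2 < `|Z1 n w|].
set Z2_large := [set w | delta / 2 < `|Z2 n w|].
have mZ1_large : measurable Z1_large by exact: measurable_normr_gt.
have mZ2_large : measurable Z2_large by exact: measurable_normr_gt.
apply: le_trans (measureU2 P mZ1_large mZ2_large); apply: le_measure; rewrite ?inE.
- by apply: measurable_normr_gt; exact: measurable_funD.
- exact: measurableU.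
move=> w /= large; rewrite /Z1_large /Z2_large /=.
have [|Z1_small] := ltP (delta / 2) `|Z1 n w|; first by left.
by right; have := ler_normD (Z1 n w) (Z2 n w); lra.
Qed.

Section DominatedBootstrapStatistic.
Context {N1 : nat} {W U : forall n, T -> {ffun 'I_(N1 + n) -> bool} -> R}.
Context {V : nat -> T -> R}.
Hypothesis mW : forall n g, measurable_fun setT (fun w => W n w g).
Hypothesis mU : forall n g, measurable_fun setT (fun w => U n w g).
Hypothesis mV : forall n, measurable_fun setT (V n).
Hypothesis W_le : forall n w g, `|W n w g| <= U n w g + `|V n w|.
Hypothesis U_cvg : forall delta, 0 < delta ->
  jointP P N1 n (fun w g => delta < U n w g) @[n --> \oo] --> 0%E.
Hypothesis V_cvg : cvg_prob0 P V.

Let V_large n delta := [set w | delta / 2 < `|V n w|].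

Let measurable_bootP_W n delta :
  measurable_fun setT (fun w => bootP R N1 n (fun g => delta < `|W n w g|)).
Proof. by apply: measurable_bootP => g; exact: measurable_normr_gt. Qed.

Let measurable_bootP_U n delta :
  measurable_fun setT (fun w => bootP R N1 n (fun g => delta < U n w g)).
Proof. by apply: measurable_bootP => g; exact: measurable_ltr_set. Qed.

Lemma bootP_le_indic n delta w :
  bootP R N1 n (fun g => delta < `|W n w g|) <=
    bootP R N1 n (fun g => delta / 2 < U n w g) + \1_(V_large n delta) w.
Proof.
have -> : \1_(V_large n delta) w = (delta / 2 < `|V n w|)%R%:R :> R.
  by rewrite indicE /in_mem /mem /= /in_set asboolb.
exact: bootP_le_split.
Qed.

Lemma jointP_le_split n delta :
  (jointP P N1 n (fun w g => (delta < `|W n w g|)%R) <=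
   jointP P N1 n (fun w g => (delta / 2 < U n w g)%R) + P (V_large n delta))%E.
Proof.
have mV_large : measurable (V_large n delta) by exact: measurable_normr_gt.
rewrite /jointP -[V_large n delta]setIT -integral_indic // -ge0_integralD //.
- apply: ge0_le_integral => //.
  + by move=> w _; rewrite lee_fin bootP_ge0.
  + exact/measurable_EFinP/measurable_bootP_W.
  + apply: emeasurable_funD; apply/measurable_EFinP.
      exact: measurable_bootP_U.
    exact: measurable_indic.
  + by move=> w _; rewrite lee_fin bootP_le_indic.
- by move=> w _; rewrite lee_fin bootP_ge0.
- exact/measurable_EFinP/measurable_bootP_U.
- exact/measurable_EFinP/measurable_indic.
Qed.

Lemma jointP_cvg0_of_dominated delta : 0 < delta ->
  jointP P N1 n (fun w g => delta < `|W n w g|) @[n --> \oo] --> 0%E.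
Proof.
move=> delta_gt0; have half_gt0 : 0 < delta / 2 by rewrite divr_gt0.
apply: (cvge0_squeeze (cvge0D (U_cvg _ half_gt0) (V_cvg _ half_gt0))) => n.
rewrite jointP_le_split andbT.
by apply: integral_ge0 => w _; rewrite lee_fin bootP_ge0.
Qed.

Lemma bootP_cvg_prob0_of_dominated delta : 0 < delta ->
  cvg_prob0 P (fun n w => bootP R N1 n (fun g => delta < `|W n w g|)).
Proof.
move=> delta_gt0 e e_gt0; have half_gt0 : 0 < delta / 2 by rewrite divr_gt0.
have := cvgeZl (y := e^-1%:E) (fin_numE _) (U_cvg _ half_gt0).
rewrite mule0 => U_cvg'.
apply: (cvge0_squeeze (cvge0D U_cvg' (V_cvg _ half_gt0))) => n; rewrite measure_ge0 /=.
set U_large := [set w | e < bootP R N1 n (fun g => delta / 2 < U n w g)].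
have mU_large : measurable U_large by exact: measurable_ltr_set.
have mV_large : measurable (V_large n delta) by exact: measurable_normr_gt.
apply: (@le_trans _ _ (P (U_large `|` V_large n delta))).
  apply: le_measure; rewrite ?inE; [exact: measurable_normr_gt|exact: measurableU|].
  move=> w /=; rewrite ger0_norm ?bootP_ge0 // => large.
  have := bootP_le_indic n delta w; rewrite indicE.
  case: (boolP (w \in V_large n delta)) => [/set_mem|_]; first by right.
  by rewrite addr0 => /(lt_le_trans large); left.
apply: (le_trans (measureU2 P mU_large mV_large)); rewrite leeD2r //.
by rewrite lee_pdivlMl //; apply: markov_prob => // w; exact: bootP_ge0.
Qed.

End DominatedBootstrapStatistic.

End ConvergenceInProbability.

Section BootstrapEstimators.
Context {R : realType} {d : measure_display} {T : measurableType d}.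
Context {P : probability T R} {Xt : Type} {N1 : nat} {X : nat -> Xt}.
Context {m : Xt -> R} {eps Y1 : nat -> T -> R}.
Context {est est0 : forall n : nat, ('I_(N1 + n) -> R) -> Xt -> R} {c : R}.
Context {betahat : nat -> T -> R}.
Context {betacheck : forall n : nat, T -> {ffun 'I_(N1 + n) -> bool} -> R}.
Hypothesis N1_gt0 : (0 < N1)%N.

Let Y := Ydata R T Xt N1 m X eps Y1.
Let mhat n w := est n (Y n w).
Let mtil n w := est0 n (Y n w).
Let Ychk n w g := Ycheck R Xt N1 X n c (Y n w) (mtil n w) g.
Let mchk n w g := est n (Ychk n w g).

Hypothesis mhat_meas :
  forall n (j : 'I_N1), measurable_fun setT (fun w => mhat n w (X j)).
Hypothesis mtil_meas :
  forall n (j : 'I_N1), measurable_fun setT (fun w => mtil n w (X j)).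
Hypothesis mchk_meas :
  forall n (j : 'I_N1) g, measurable_fun setT (fun w => mchk n w g (X j)).
Hypothesis betahat_min : forall n w b,
  SSR R Xt N1 X n (Y n w) (mhat n w) (betahat n w)
  <= SSR R Xt N1 X n (Y n w) (mhat n w) b.
Hypothesis betacheck_min : forall n w g b,
  SSR R Xt N1 X n (Ychk n w g) (mchk n w g) (betacheck n w g)
  <= SSR R Xt N1 X n (Ychk n w g) (mchk n w g) b.

Let err_hat n w := maxJ1 R N1 (fun j => `|mhat n w (X j) - m (X j)|).
Let err_null n w := maxJ1 R N1 (fun j => `|mhat n w (X j) - mtil n w (X j)|).
Let err_boot n w g := maxJ1 R N1 (fun j => `|mtil n w (X j) - mchk n w g (X j)|).

Let W n w g := betacheck n w g - c
  - N1%:R^-1 * \sum_(j < N1)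
      sgnb R (g (lshift n j)) * (tau R T Xt m X eps Y1 j w + eps j w - c).

Lemma Ydata_treated n w (j : 'I_N1) : Y n w (lshift n j) = Y1 j w.
Proof. by rewrite /Y /Ydata /Yobs /= (Dind_treated j); ring. Qed.

Lemma betahat_errorE n w :
  betahat n w - N1%:R^-1 * \sum_(j < N1) (tau R T Xt m X eps Y1 j w + eps j w) =
  N1%:R^-1 * \sum_(j < N1) (m (X j) - mhat n w (X j)).
Proof.
rewrite (SSR_argminE N1_gt0 (betahat_min n w)) -mulrBr -sumrB.
by congr (_ * _); apply: eq_bigr => j _; rewrite Ydata_treated /tau /Y0; ring.
Qed.

Lemma betacheck_errorE n w g : W n w g = N1%:R^-1 * \sum_(j < N1)
  ((mtil n w (X j) - mchk n w g (X j))
   + sgnb R (g (lshift n j)) * (m (X j) - mtil n w (X j))).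
Proof.
rewrite /W (SSR_argminE N1_gt0 (betacheck_min n w g)) mean_subr // -mulrBr -sumrB.
congr (_ * _); apply: eq_bigr => j _.
by rewrite /Ychk /Ycheck Ydata_treated /tau /Y0 /= (Dind_treated j); ring.
Qed.

Lemma betacheck_error_le n w g :
  `|W n w g| <= err_boot n w g + `|err_hat n w + err_null n w|.
Proof.
rewrite betacheck_errorE (ger0_norm (addr_ge0 (maxJ1_ge0 _) (maxJ1_ge0 _))).
apply: norm_mean_le => // j.
have := le_maxJ1 (fun j => `|mtil n w (X j) - mchk n w g (X j)|) j.
have := le_maxJ1 (fun j => `|mhat n w (X j) - m (X j)|) j.
have := le_maxJ1 (fun j => `|mhat n w (X j) - mtil n w (X j)|) j.
have := ler_distD (mhat n w (X j)) (m (X j)) (mtil n w (X j)).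
have := ler_normD (mtil n w (X j) - mchk n w g (X j))
  (sgnb R (g (lshift n j)) * (m (X j) - mtil n w (X j))).
rewrite normrM normr_sgnb mul1r (distrC (m (X j)) (mhat n w (X j))).
rewrite /err_boot /err_hat /err_null /=; lra.
Qed.

Let measurable_err_hat n : measurable_fun setT (err_hat n).
Proof.
apply: measurable_maxJ1 => j; apply: measurableT_comp => //.
exact: measurable_funB.
Qed.

Let measurable_err_null n : measurable_fun setT (err_null n).
Proof.
apply: measurable_maxJ1 => j; apply: measurableT_comp => //.
exact: measurable_funB.
Qed.

Let measurable_err_boot n g : measurable_fun setT (fun w => err_boot n w g).
Proof.
apply: measurable_maxJ1 => j; apply: measurableT_comp => //.
exact: measurable_funB.
Qed.

Let measurable_W n g : measurable_fun setT (fun w => W n w g).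
Proof.
under eq_fun do rewrite betacheck_errorE.
apply: measurable_mean => j; apply: measurable_funD; first exact: measurable_funB.
by apply: measurable_funM => //; exact: measurable_funB.
Qed.

Hypothesis err_hat_cvg : cvg_prob0 P err_hat.

Lemma betahat_cvg_prob0 :
  cvg_prob0 P (fun n w => betahat n w
    - N1%:R^-1 * \sum_(j < N1) (tau R T Xt m X eps Y1 j w + eps j w)).
Proof.
move: err_hat_cvg; apply: cvg_prob0_le => // [n|n w].
  under eq_fun do rewrite betahat_errorE.
  by apply: measurable_mean => j; exact: measurable_funB.
rewrite betahat_errorE [X in _ <= X]ger0_norm ?maxJ1_ge0 //.
by apply: norm_mean_le => // j; rewrite distrC; exact: le_maxJ1.
Qed.

Hypothesis err_null_cvg : cvg_prob0 P err_null.
Hypothesis err_boot_cvg : forall delta, 0 < delta ->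
  jointP P N1 n (fun w g => delta < err_boot n w g) @[n --> \oo] --> 0%E.

Let measurable_err_hat_null n :
  measurable_fun setT (fun w => err_hat n w + err_null n w).
Proof. exact: measurable_funD. Qed.

Let err_hat_null_cvg : cvg_prob0 P (fun n w => err_hat n w + err_null n w).
Proof. exact: cvg_prob0D. Qed.

Lemma betacheck_jointP_cvg0 delta : 0 < delta ->
  jointP P N1 n (fun w g => delta < `|W n w g|) @[n --> \oo] --> 0%E.
Proof.
exact: (jointP_cvg0_of_dominated P measurable_W measurable_err_boot
  measurable_err_hat_null betacheck_error_le err_boot_cvg err_hat_null_cvg).
Qed.

Lemma betacheck_bootP_cvg_prob0 delta : 0 < delta ->
  cvg_prob0 P (fun n w => bootP R N1 n (fun g => delta < `|W n w g|)).
Proof.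
exact: (bootP_cvg_prob0_of_dominated P measurable_W measurable_err_boot
  measurable_err_hat_null betacheck_error_le err_boot_cvg err_hat_null_cvg).
Qed.

End BootstrapEstimators.

Theorem proposition1 (R : realType) (d : measure_display) (T : measurableType d)
  (P : probability T R) (Xt : Type) (N1 : nat) (X : nat -> Xt) (m : Xt -> R)
  (eps Y1 : nat -> T -> R)
  (est est0 : forall n : nat, ('I_(N1 + n) -> R) -> Xt -> R)
  (c : R) (betahat : nat -> T -> R)
  (betacheck : forall n : nat, T -> {ffun 'I_(N1 + n) -> bool} -> R) :
  (0 < N1)%N ->
  (forall k, measurable_fun setT (eps k)) ->
  (forall k, P.-integrable setT (EFin \o eps k)) ->
  (forall k, ('E_P[eps k] = 0)%E) ->
  (forall k, measurable_fun setT (Y1 k)) ->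
  let Y := Ydata R T Xt N1 m X eps Y1 in
  let mhat n w := est n (Y n w) in
  let mtil n w := est0 n (Y n w) in
  let Ychk n w g := Ycheck R Xt N1 X n c (Y n w) (mtil n w) g in
  let mchk n w g := est n (Ychk n w g) in
  (forall n (j : 'I_N1), measurable_fun setT (fun w => mhat n w (X j))) ->
  (forall n (j : 'I_N1), measurable_fun setT (fun w => mtil n w (X j))) ->
  (forall n (j : 'I_N1) g, measurable_fun setT (fun w => mchk n w g (X j))) ->
  (forall n w b, SSR R Xt N1 X n (Y n w) (mhat n w) (betahat n w)
                 <= SSR R Xt N1 X n (Y n w) (mhat n w) b) ->
  (forall n w g b, SSR R Xt N1 X n (Ychk n w g) (mchk n w g) (betacheck n w g)
                   <= SSR R Xt N1 X n (Ychk n w g) (mchk n w g) b) ->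
  let W n w g := betacheck n w g - c
     - N1%:R^-1 * \sum_(j < N1)
         sgnb R (g (lshift n j)) * (tau R T Xt m X eps Y1 j w + eps j w - c) in
  (* (A1) *)
  cvg_prob0 P (fun n w => maxJ1 R N1 (fun j => `|mhat n w (X j) - m (X j)|)) ->
  cvg_prob0 P (fun n w => betahat n w
                 - N1%:R^-1 * \sum_(j < N1) (tau R T Xt m X eps Y1 j w + eps j w))
  /\
  ((* (A2) *)
   cvg_prob0 P (fun n w => maxJ1 R N1 (fun j => `|mhat n w (X j) - mtil n w (X j)|)) ->
   (* (A3) *)
   (forall delta : R, 0 < delta ->
      jointP P N1 n
        (fun w g => delta < maxJ1 R N1 (fun j => `|mtil n w (X j) - mchk n w g (X j)|))
      @[n --> \oo] --> 0%E) ->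
   (* unconditional convergence in probability *)
   (forall delta : R, 0 < delta ->
      jointP P N1 n (fun w g => delta < `|W n w g|) @[n --> \oo] --> 0%E)
   /\
   (* conditional on the data *)
   (forall delta : R, 0 < delta ->
      cvg_prob0 P (fun n w => bootP R N1 n (fun g => delta < `|W n w g|)))).
Proof.
move=> N1_gt0 _ _ _ _ Y mhat mtil Ychk mchk mhat_meas mtil_meas mchk_meas
  betahat_min betacheck_min W err_hat_cvg.
split; first exact: (betahat_cvg_prob0 N1_gt0 mhat_meas betahat_min err_hat_cvg).
move=> err_null_cvg err_boot_cvg; split=> delta.
- exact: (betacheck_jointP_cvg0 N1_gt0 mhat_meas mtil_meas mchk_meas betacheck_min
    err_hat_cvg err_null_cvg err_boot_cvg).
- exact: (betacheck_bootP_cvg_prob0 N1_gt0 mhat_meas mtil_meas mchk_meas betacheck_min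
    err_hat_cvg err_null_cvg err_boot_cvg).
Qed.
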